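(* Let $d\ge0$ be an even integer and $\lambda\in(0,\infty)\setminus\mathbb{N}$ with $d\le -2+2\left\lfloor\frac{\lambda+1}{2}\right\rfloor$. Then $S_{d,\mathbf{w}^\lambda}=S_{d+1,\mathbf{w}^\lambda}$.
   Context: Let $\phi:[0,1]\to(0,1]$ be non-increasing with $\phi(0)=1$ (in particular positive on $[0,1)$), $\omega(x)=\phi(|x|)$ for $|x|\le1$ and $0$ otherwise, and $w^\lambda_m=\omega(m/\lambda)$, $m\in\mathbb{Z}$. For an integer $e\ge0$ let $\Pi_e$ be the real polynomials of degree at most $e$. For $i\in\{0,1\}$ let $M_i=\{m\in\mathbb{Z}: m\equiv i\pmod 2,\ |m|<\lambda\}$. The weighted local polynomial regression scheme $S_{e,\mathbf{w}^\lambda}$ maps a real sequence $\mathbf{f}=(f_j)_{j\in\mathbb{Z}}$ to $(S\mathbf{f})_{2j+i}=\hat p(0)$ ($i\in\{0,1\}$, $j\in\mathbb{Z}$), where $\hat p$ is a minimizer of $\sum_{m\in M_i} w^\lambda_m(f_{j+(m+i)/2}-p(m))^2$ over $p\in\Pi_e$ (when the minimizer is not unique, $\hat p$ is an interpolating polynomial and its value at $0$ is independent of the choice). *)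

From HB Require Import structures.
From mathcomp Require Import all_boot all_order all_algebra.
From mathcomp Require Import boolp classical_sets reals.
Set Implicit Arguments. Unset Strict Implicit. Unset Printing Implicit Defensive.
Import Order.TTheory GRing.Theory Num.Theory.
Local Open Scope ring_scope.

Section LPR.
Variable R : realType.

Definition omega (phi : R -> R) (x : R) : R :=
  if `|x| <= 1 then phi `|x| else 0.

Definition wlam (phi : R -> R) (lam : R) (m : int) : R := omega phi (m%:~R / lam).

(* a bound N (natural) such that every integer m with |m| < lam satisfies |m| <= N *)
Definition Nbound (lam : R) : nat := `|Num.floor lam|%N.+1.

Definition inM (lam : R) (i : int) (m : int) : bool :=
  ((m %% 2)%Z == i) && (`|m%:~R : R| < lam).

(* the weighted least squares functional
   sum_{m in M_i} w_m (f_{j+(m+i)/2} - p(m))^2 ;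
   m ranges over -N..N (with N = Nbound lam) which contains M_i *)
Definition lpr_cost (phi : R -> R) (lam : R) (f : int -> R) (i j : int)
    (p : {poly R}) : R :=
  \sum_(k < (Nbound lam).*2.+1 | inM lam i (k%:Z - (Nbound lam)%:Z))
     wlam phi lam (k%:Z - (Nbound lam)%:Z) *
     (f (j + ((k%:Z - (Nbound lam)%:Z + i) %/ 2)%Z)
        - p.[(k%:Z - (Nbound lam)%:Z)%:~R]) ^+ 2.

Definition lpr_minimizer (e : nat) (phi : R -> R) (lam : R) (f : int -> R)
    (i j : int) (p : {poly R}) : Prop :=
  (size p <= e.+1)%N /\
  forall q : {poly R}, (size q <= e.+1)%N ->
    lpr_cost phi lam f i j p <= lpr_cost phi lam f i j q.

(* The value at 0 is (by the paper) independent of the minimizer; we select it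
   by classical choice (xget), defaulting to 0 if no minimizer existed. *)
Definition lpr_scheme (e : nat) (phi : R -> R) (lam : R) (f : int -> R)
    (n : int) : R :=
  let i := (n %% 2)%Z in
  let j := (n %/ 2)%Z in
  xget 0 [set v | exists p, lpr_minimizer e phi lam f i j p /\ p.[0] = v].

End LPR.

From mathcomp Require Import all_boot all_order all_algebra.
From mathcomp Require Import boolp classical_sets reals.
From mathcomp Require Import ring lra zify.
Set Implicit Arguments. Unset Strict Implicit. Unset Printing Implicit Defensive.
Import Order.TTheory GRing.Theory Num.Theory.
Local Open Scope ring_scope.

(* The nodes [m] of [M_i] and the weights [w_m] are symmetric under [m |-> -m],
   so in the least-squares cost of [p = e + o] (even and odd parts) the cross
   term [sum_m w_m e(m) o(m)] vanishes: the cost decouples as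
   [cost e + cost o - cost 0].  Hence [p] is a minimizer iff its even and odd
   parts are minimizers separately, and [p(0) = e(0)] depends only on the even
   part.  For even [d] the even parts of polynomials of degree [<= d] and
   [<= d + 1] are the same, so the minimizers for degrees [d] and [d + 1] have
   the same sets of values at [0], and [xget] selects the same value from them
   whether or not the minimizer is unique.  Gluing an even minimizer to an odd
   one needs minimizers to exist: a quadratic functional bounded below on
   polynomials of bounded degree attains its minimum, by minimizing out the
   top coefficient (completing the square) and inducting on the degree. *)

Section QuadraticFunctional.
Variables (R : realFieldType) (V : lmodType R).

Lemma linear_bounded_below_eq0 (m c b : R) : (forall t, m <= c + t * b) -> b = 0.
Proof.
move=> H; have [//|b_neq0] := eqVneq b 0.
by have := H ((m - c - 1) / b); rewrite divfK //; lra.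
Qed.

Lemma square_bounded_below_ge0 (m c a : R) : (forall t, m <= c + t ^+ 2 * a) -> 0 <= a.
Proof.
move=> H; rewrite leNgt; apply/negP => a_lt0.
pose t := `|(m - c) / a| + 1.
have t_ge1 : 1 <= t by rewrite /t; have := normr_ge0 ((m - c) / a); lra.
have t_le_t2 : t <= t ^+ 2 by rewrite expr2 ler_peMl //; lra.
have : (m - c) / a < t ^+ 2.
  by move: t_le_t2; rewrite /t; have := ler_norm ((m - c) / a); lra.
rewrite -(ltr_nM2r a_lt0) divfK ?lt_eqF //.
by have := H t; lra.
Qed.

Lemma quadratic_bounded_below (m c b a : R) :
  (forall t, m <= c + t * b + t ^+ 2 * a) -> 0 <= a /\ (a = 0 -> b = 0).
Proof.
move=> H; split.
  apply: (@square_bounded_below_ge0 m c) => t.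
  by have := H t; have := H (- t); rewrite sqrrN; lra.
move=> a0; apply: (@linear_bounded_below_eq0 m c) => t.
by have := H t; rewrite a0 mulr0 addr0.
Qed.

Definition quadratic (F : V -> R) :=
  exists (B : V -> V -> R) (l : V -> R) (c : R),
  [/\ forall (a : R) (u v w : V), B (a *: u + v) w = a * B u w + B v w,
      forall u v, B u v = B v u,
      forall (a : R) (u v : V), l (a *: u + v) = a * l u + l v &
      forall u, F u = B u u + l u + c].

Lemma quadratic_line (F : V -> R) (B : V -> V -> R) (l : V -> R) (c : R) :
  (forall (a : R) (u v w : V), B (a *: u + v) w = a * B u w + B v w) ->
  (forall u v, B u v = B v u) ->
  (forall (a : R) (u v : V), l (a *: u + v) = a * l u + l v) ->
  (forall u, F u = B u u + l u + c) ->
  forall u v t, F (u + t *: v) = F u + t * (2 * B u v + l v) + t ^+ 2 * B v v.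
Proof.
move=> HB HS Hl HF u v t.
rewrite !HF (addrC u) HB Hl (HS v) (HS u) !HB (HS v u); ring.
Qed.

(* If [B v v > 0], [G] comes from completing the square in [t]; otherwise
   every line [u + t v] on which [F] is bounded below is a level line, and
   [G = F]. *)
Lemma quadratic_min_line (F : V -> R) (v : V) : quadratic F ->
  exists2 G, quadratic G &
  forall u, (exists m, forall t, m <= F (u + t *: v)) ->
    exists t0, G u = F (u + t0 *: v) /\ forall t, G u <= F (u + t *: v).
Proof.
move=> [B [l [c [HB HS Hl HF]]]]; have HL := quadratic_line HB HS Hl HF.
have [a_gt0|a_le0] := ltrP 0 (B v v); last first.
  exists F; first by exists B, l, c.
  move=> u [m Hm]; exists 0; rewrite scale0r addr0; split => // t.
  have [a_ge0 b_eq0] : 0 <= B v v /\ (B v v = 0 -> 2 * B u v + l v = 0).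
    by apply: (@quadratic_bounded_below m (F u)) => s; rewrite -HL.
  have a0 : B v v = 0 by lra.
  by rewrite HL a0 b_eq0 // !mulr0 !addr0.
have a_neq0 : B v v != 0 by rewrite gt_eqF.
pose b u := 2 * B u v + l v.
exists (fun u => F u - b u ^+ 2 / (4 * B v v)).
  exists (fun u w => B u w - B u v * B w v / B v v),
         (fun u => l u - l v / B v v * B u v), (c - l v ^+ 2 / (4 * B v v)).
  split=> [a u w z | u w | a u w | u] /=.
  - by rewrite !HB; field; exact: a_neq0.
  - by rewrite (HS u w) [B u v * _]mulrC.
  - by rewrite Hl HB; field; exact: a_neq0.
  - by rewrite /b HF; field; exact: a_neq0.
move=> u _; exists (- b u / (2 * B v v)); split=> [|t].
  by rewrite HL -/(b u); field; exact: a_neq0.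
rewrite HL -/(b u).
have : 0 <= (2 * B v v * t + b u) ^+ 2 / (4 * B v v).
  by apply: divr_ge0; [exact: sqr_ge0 | lra].
have -> : (2 * B v v * t + b u) ^+ 2 / (4 * B v v)
        = t * b u + t ^+ 2 * B v v + b u ^+ 2 / (4 * B v v) by field.
lra.
Qed.

End QuadraticFunctional.

Section PolynomialMinimizers.
Variable R : realFieldType.
Implicit Types (p q : {poly R}) (F : {poly R} -> R).

Definition minimizer (n : nat) F p :=
  (size p <= n)%N /\ forall q, (size q <= n)%N -> F p <= F q.

Lemma size_addXn n p (t : R) : (size p <= n)%N -> (size (p + t *: 'X^n)%R <= n.+1)%N.
Proof.
move=> pn; apply: leq_trans (size_polyD _ _) _; rewrite geq_max (leqW pn) /=.
by apply: leq_trans (size_scale_leq _ _) _; rewrite size_polyXn.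
Qed.

Lemma poly_splitXn n p : (size p <= n.+1)%N ->
  exists2 q : {poly R}, (size q <= n)%N & p = q + p`_n *: 'X^n.
Proof.
move=> /leq_sizeP pn; exists (p - p`_n *: 'X^n); last by rewrite subrK.
apply/leq_sizeP => i ni; rewrite coefB coefZ coefXn.
have [->|i_neq_n] := eqVneq i n; first by rewrite mulr1 subrr.
by rewrite mulr0 subr0 pn // ltn_neqAle eq_sym i_neq_n.
Qed.

Lemma quadratic_minimizer_exists n F : quadratic F ->
  (exists m, forall p, (size p <= n)%N -> m <= F p) -> exists p, minimizer n F p.
Proof.
elim: n F => [|n IH] F Fq [m Fm].
  exists 0; split=> [|q]; first by rewrite size_poly0.
  by rewrite leqn0 size_poly_eq0 => /eqP ->.
have [G Gq HG] := quadratic_min_line 'X^n Fq.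
have line_bounded q : (size q <= n)%N -> exists m, forall t, m <= F (q + t *: 'X^n).
  by move=> qn; exists m => t; apply: Fm; exact: size_addXn.
have [p0 [p0n p0min]] : exists p0, minimizer n G p0.
  apply: IH => //; exists m => q qn.
  by have [t [-> _]] := HG q (line_bounded q qn); apply: Fm; exact: size_addXn.
have [t0 [Gp0 _]] := HG p0 (line_bounded p0 p0n).
exists (p0 + t0 *: 'X^n); split=> [|p /poly_splitXn [q qn ->]].
  exact: size_addXn.
have [_ [_ Gq_le]] := HG q (line_bounded q qn).
by rewrite -Gp0; apply: le_trans (p0min q qn) (Gq_le _).
Qed.

End PolynomialMinimizers.

Section EvenOddParts.
Variable R : comNzRingType.
Implicit Types (p q : {poly R}) (x : R).

Definition even_part p := even_poly p \Po 'X^2.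
Definition odd_part p := (odd_poly p \Po 'X^2) * 'X.

Lemma even_part_add_odd_part p : even_part p + odd_part p = p.
Proof. exact: poly_even_odd. Qed.

Lemma coef_even_part p i : (even_part p)`_i = if odd i then 0 else p`_i.
Proof.
rewrite /even_part coef_comp_poly_Xn // coef_even_poly dvdn2.
by case: (boolP (odd i)) => //= i_even; rewrite -muln2 divnK // dvdn2.
Qed.

Lemma coef_odd_part p i : (odd_part p)`_i = if odd i then p`_i else 0.
Proof.
rewrite /odd_part coefMX; case: i => [|i] //=.
rewrite coef_comp_poly_Xn // coef_odd_poly dvdn2.
by case: (boolP (odd i)) => //= i_even; rewrite -muln2 divnK // dvdn2.
Qed.

Lemma size_even_part p : (size (even_part p) <= size p)%N.
Proof.
apply/leq_sizeP => i /leq_sizeP pi; rewrite coef_even_part pi //; exact: if_same.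
Qed.

Lemma size_odd_part p : (size (odd_part p) <= size p)%N.
Proof.
apply/leq_sizeP => i /leq_sizeP pi; rewrite coef_odd_part pi //; exact: if_same.
Qed.

Lemma size_even_part_even d p : ~~ odd d ->
  (size p <= d.+2)%N -> (size (even_part p) <= d.+1)%N.
Proof.
move=> d_even /leq_sizeP pd; apply/leq_sizeP => i di; rewrite coef_even_part.
have [->|i_neq] := eqVneq i d.+1; first by rewrite /= d_even.
by rewrite pd ?if_same // ltn_neqAle eq_sym i_neq.
Qed.

Lemma even_part_idem p : even_part (even_part p) = even_part p.
Proof. by apply/polyP => i; rewrite !coef_even_part; case: odd. Qed.

Lemma horner_even_partN p x : (even_part p).[- x] = (even_part p).[x].
Proof. by rewrite /even_part !horner_comp !hornerXn sqrrN. Qed.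

Lemma horner_odd_partN p x : (odd_part p).[- x] = - (odd_part p).[x].
Proof. by rewrite /odd_part !hornerMX !horner_comp !hornerXn sqrrN mulrN. Qed.

Lemma horner_odd_part0 p : (odd_part p).[0] = 0.
Proof. by rewrite /odd_part hornerMX mulr0. Qed.

Lemma horner0_even_odd_glue p q : (even_part p + odd_part q).[0] = p.[0].
Proof.
by rewrite -{2}(even_part_add_odd_part p) !hornerD !horner_odd_part0.
Qed.

End EvenOddParts.

Section DecoupledMinimization.
Variables (R : realFieldType) (F : {poly R} -> R).
Implicit Types (p q : {poly R}).

Hypothesis F_decouple : forall p q,
  F (even_part p + odd_part q) = F (even_part p) + F (odd_part q) - F 0.
Hypothesis F_min_exists : forall n, exists p, minimizer n F p.

Lemma F_split p : F p = F (even_part p) + F (odd_part p) - F 0.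
Proof. by rewrite -F_decouple even_part_add_odd_part. Qed.

Lemma minimizer_even_part n p q : minimizer n F p -> (size q <= n)%N ->
  F (even_part p) <= F (even_part q).
Proof.
move=> [pn p_min] qn.
have : F p <= F (even_part q + odd_part p).
  apply: p_min; apply: leq_trans (size_polyD _ _) _.
  by rewrite geq_max (leq_trans (size_even_part _)) ?(leq_trans (size_odd_part _)).
by rewrite F_decouple F_split; lra.
Qed.

Lemma minimizer_odd_part n p q : minimizer n F p -> (size q <= n)%N ->
  F (odd_part p) <= F (odd_part q).
Proof.
move=> [pn p_min] qn.
have : F p <= F (even_part p + odd_part q).
  apply: p_min; apply: leq_trans (size_polyD _ _) _.
  by rewrite geq_max (leq_trans (size_even_part _)) ?(leq_trans (size_odd_part _)).
by rewrite F_decouple F_split; lra.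
Qed.

Lemma minimizer_glue n n' p p' : minimizer n F p -> minimizer n' F p' ->
  (size (even_part p) <= n')%N ->
  (forall q, (size q <= n')%N -> (size (even_part q) <= n)%N) ->
  minimizer n' F (even_part p + odd_part p').
Proof.
move=> p_min p'_min pn' even_n; split=> [|q qn'].
  apply: leq_trans (size_polyD _ _) _; rewrite geq_max pn' /=.
  by case: p'_min => p'n' _; apply: leq_trans (size_odd_part _) _.
rewrite F_decouple [F q]F_split.
have := minimizer_even_part p_min (even_n q qn'); rewrite even_part_idem.
have := minimizer_odd_part p'_min qn'.
lra.
Qed.

Lemma minimizer_values_even d : ~~ odd d ->
  [set v | exists p, minimizer d.+1 F p /\ p.[0] = v]%classic =
  [set v | exists p, minimizer d.+2 F p /\ p.[0] = v]%classic.
Proof.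
move=> d_even; apply/seteqP; split=> v [p [p_min <-]].
- have [p' p'_min] := F_min_exists d.+2.
  exists (even_part p + odd_part p'); split; last exact: horner0_even_odd_glue.
  apply: (minimizer_glue p_min p'_min); last by move=> q; exact: size_even_part_even.
  by case: p_min => pd _; apply: leqW (leq_trans (size_even_part p) pd).
- have [p' p'_min] := F_min_exists d.+1.
  exists (even_part p + odd_part p'); split; last exact: horner0_even_odd_glue.
  apply: (minimizer_glue p_min p'_min).
    by case: p_min => pd _; exact: size_even_part_even.
  by move=> q qd; apply: leqW (leq_trans (size_even_part q) qd).
Qed.

End DecoupledMinimization.

Section WeightedLeastSquares.
Variables (R : realFieldType) (I : finType) (P : pred I) (w y x : I -> R).

Definition wls_cost (p : {poly R}) := \sum_(k | P k) w k * (y k - p.[x k]) ^+ 2.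

Lemma quadratic_wls_cost : quadratic wls_cost.
Proof.
exists (fun p q => \sum_(k | P k) w k * (p.[x k] * q.[x k])),
       (fun p => \sum_(k | P k) (- 2) * w k * y k * p.[x k]),
       (\sum_(k | P k) w k * y k ^+ 2); split.
- move=> a p q r; rewrite mulr_sumr -big_split; apply: eq_bigr => k _ /=.
  by rewrite hornerD hornerZ; ring.
- by move=> p q; apply: eq_bigr => k _; rewrite [p.[_] * _]mulrC.
- move=> a p q; rewrite mulr_sumr -big_split; apply: eq_bigr => k _ /=.
  by rewrite hornerD hornerZ; ring.
- by move=> p; rewrite /wls_cost -!big_split; apply: eq_bigr => k _ /=; ring.
Qed.

Lemma wls_cost_ge0 p : (forall k, P k -> 0 <= w k) -> 0 <= wls_cost p.
Proof. by move=> w_ge0; apply: sumr_ge0 => k Pk; rewrite mulr_ge0 ?w_ge0 ?sqr_ge0. Qed.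

Lemma wls_costD p q : wls_cost (p + q) =
  wls_cost p + wls_cost q - wls_cost 0 + 2 * \sum_(k | P k) w k * (p.[x k] * q.[x k]).
Proof.
rewrite /wls_cost mulr_sumr -big_split -sumrB -big_split; apply: eq_bigr => k _ /=.
by rewrite hornerD horner0; ring.
Qed.

Variable s : I -> I.
Hypothesis s_inv : involutive s.
Hypothesis P_sym : forall k, P (s k) = P k.

Lemma sum_antisym_eq0 (h : I -> R) :
  (forall k, P k -> h (s k) = - h k) -> \sum_(k | P k) h k = 0.
Proof.
move=> h_anti.
have : \sum_(k | P k) h k = - \sum_(k | P k) h k.
  rewrite {1}(reindex_inj (inv_inj s_inv)) -sumrN.
  by under eq_bigl do rewrite P_sym; apply: eq_bigr => k Pk; rewrite h_anti.
lra.
Qed.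

Hypothesis w_sym : forall k, P k -> w (s k) = w k.
Hypothesis x_anti : forall k, P k -> x (s k) = - x k.

Lemma wls_cost_decouple p q : wls_cost (even_part p + odd_part q) =
  wls_cost (even_part p) + wls_cost (odd_part q) - wls_cost 0.
Proof.
rewrite wls_costD sum_antisym_eq0 ?mulr0 ?addr0 // => k Pk.
by rewrite w_sym // x_anti // horner_even_partN horner_odd_partN !mulrN.
Qed.

End WeightedLeastSquares.

Section LocalPolynomialRegression.
Variables (R : realType) (phi : R -> R) (lam : R).
Hypothesis phi_ge0 : forall x : R, 0 <= x <= 1 -> 0 <= phi x.

Lemma rev_ord_centered N (k : 'I_N.*2.+1) :
  (rev_ord k)%:Z - N%:Z = - (k%:Z - N%:Z).
Proof. by rewrite /=; move: (nat_of_ord k) (ltn_ord k) => m; rewrite -addnn; lia. Qed.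

Lemma modzN2 (m : int) : ((- m) %% 2)%Z = (m %% 2)%Z.
Proof. by rewrite -(modzMDl (- m) m 2); congr (_ %% _)%Z; ring. Qed.

Lemma inMN i m : inM lam i (- m) = inM lam i m.
Proof. by rewrite /inM modzN2 intrN normrN. Qed.

Lemma wlamN m : wlam phi lam (- m) = wlam phi lam m.
Proof. by rewrite /wlam /omega intrN mulNr normrN. Qed.

Lemma wlam_ge0 m : 0 <= wlam phi lam m.
Proof.
by rewrite /wlam /omega; case: ifP => // m_le1; rewrite phi_ge0 // normr_ge0.
Qed.

Lemma lpr_cost_decouple f i j p q :
  lpr_cost phi lam f i j (even_part p + odd_part q) =
  lpr_cost phi lam f i j (even_part p) + lpr_cost phi lam f i j (odd_part q)
  - lpr_cost phi lam f i j 0.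
Proof.
apply: (@wls_cost_decouple _ _ _ _ _ _ (@rev_ord _)) => [|k|k _|k _];
  rewrite ?rev_ord_centered.
- exact: rev_ordK.
- exact: inMN.
- exact: wlamN.
- by rewrite intrN.
Qed.

Lemma lpr_minimizer_exists f i j n :
  exists p, minimizer n (lpr_cost phi lam f i j) p.
Proof.
apply: quadratic_minimizer_exists; first exact: quadratic_wls_cost.
by exists 0 => p _; apply: wls_cost_ge0 => k _; exact: wlam_ge0.
Qed.

End LocalPolynomialRegression.

Theorem proposition3p7 (R : realType) (phi : R -> R)
  (phi_pos : forall x : R, 0 <= x <= 1 -> 0 < phi x <= 1)
  (phi_noninc : forall x y : R, 0 <= x -> x <= y -> y <= 1 -> phi y <= phi x)
  (phi0 : phi 0 = 1)
  (d : nat) (d_even : ~~ odd d)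
  (lam : R) (lam_pos : 0 < lam) (lam_notnat : forall n : nat, lam != n%:R)
  (hd : (d%:Z <= -2 + 2 * Num.floor ((lam + 1) / 2))%R) :
  forall f : int -> R,
    lpr_scheme d phi lam f = lpr_scheme d.+1 phi lam f.
Proof.
have phi_ge0 x : 0 <= x <= 1 -> 0 <= phi x by move/phi_pos/andP => [/ltW].
move=> f; apply/funext => n; rewrite /lpr_scheme; congr (xget 0 _).
apply: minimizer_values_even d_even.
  exact: lpr_cost_decouple.
exact: lpr_minimizer_exists.
Qed.
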